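(* Let $\mathfrak g$ be of type $A_n$, $B_n$ or $D_n$, $i\in I$ and $b\in\mathcal B(\infty)$, and let $\sigma_i^\ast(b)=\max\{\Sigma^\ast_\tau(b):\tau\in\Pi_i^\ast\}$. If $\sigma_i^\ast(b)=\Sigma^\ast_\lambda(b)=\Sigma^\ast_\mu(b)$ for some $\lambda,\mu\in\Pi_i^\ast$, then $\sigma_i^\ast(b)=\Sigma^\ast_{\lambda\cup\mu}(b)=\Sigma^\ast_{\lambda\cap\mu}(b)$.
   Context: $I=\{1,\dots,n\}$, Cartan integers $a_{ij}$: $a_{ii}=2$; for $i\ne j$: type $A_n$: $a_{ij}=-1$ if $|i-j|=1$, else $0$; type $B_n$: same but $a_{n,n-1}=-2$; type $D_n$ ($n\ge4$): $a_{ij}=-1$ iff $\{i,j\}=\{k,k+1\}$, $k\le n-2$, or $\{i,j\}=\{n-2,n\}$, else $0$. Index sets $\mathcal I^A=\{(s,t):s+t\le n+1\}$, $\mathcal I^B=\{(s,t):1\le s\le n\}$, $\mathcal I^D=\{(s,t):1\le s\le n-1\}$ ($s\ge1$, $t\in I$). $\mathcal B(\infty)\subset\mathbb Z_{\ge0}^{\mathcal I}$ is the polyhedral realization of $B(\infty)$ for the sequence $(\dots,n,\dots,1,n,\dots,1)$ (explicitly: type $A$: $b_{1,k}\ge b_{2,k-1}\ge\dots\ge b_{k,1}$, $1\le k\le n$; types $B,D$: analogous known inequalities); only the following is needed. Convention $b_{s,t}=0$ for $(s,t)\notin\mathcal I$. $\partial^\ast_{s,t}(b)=b_{s-1,t}+\sum_{k>t}a_{tk}b_{s-1,k}+\sum_{k<t}a_{tk}b_{s,k}+b_{s,t}$.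 Tableaux $T_i^\ast$: for $i\le n$ (type $A$), $i\le n-1$ (type $B$), $i\le n-2$ (type $D$), shape $(i)$ with $T_i^\ast(1,t)=\partial^\ast_{t,i+1-t}$; type $B_n$: $T_n^\ast$ of shape $(n,n-1,\dots,1)$ with $T_n^\ast(s,t)=2\partial^\ast_{s+t-1,n-t}$ ($t\ge2$), $T_n^\ast(s,1)=\partial^\ast_{s,n}$; type $D_n$: $T_{n-1}^\ast,T_n^\ast$ of shape $(n-1,\dots,1)$ with $T(s,t)=\partial^\ast_{s+t-1,n-t}$ ($t\ge2$), $T^\ast_{n-1}(s,1)=\partial^\ast_{s,n-1}$ for odd $s$ and $\partial^\ast_{s,n}$ for even $s$, $T_n^\ast(s,1)$ the same with $n-1,n$ swapped. $\Pi_i^\ast$: nonempty strict partitions with diagram contained in the shape of $T_i^\ast$. $\Sigma^\ast_\lambda(b)=\sum_{(s,t)\in\lambda}T_i^\ast(s,t)(b)$. For partitions, $\lambda\cup\mu=(\max(\lambda_k,\mu_k))_k$, $\lambda\cap\mu=(\min(\lambda_k,\mu_k))_k$. *)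

From mathcomp Require Import all_boot all_order all_algebra.
Set Implicit Arguments. Unset Strict Implicit. Unset Printing Implicit Defensive.
Import Order.TTheory GRing.Theory Num.Theory.
Local Open Scope ring_scope.

Inductive ctype := TA | TB | TD.

Definition valid_type (ty : ctype) (n : nat) : bool :=
  match ty with TA => (1 <= n)%N | TB => (2 <= n)%N | TD => (4 <= n)%N end.

Definition inI (n i : nat) : bool := (1 <= i <= n)%N.

(* Cartan integers a_{ij}; set to 0 when i or j is not in I *)
Definition cartan (ty : ctype) (n i j : nat) : int :=
  if inI n i && inI n j then
    if i == j then 2 else
    match ty with
    | TA => if (i == j.+1) || (j == i.+1) then -1 else 0
    | TB => if (i == n) && (j == n.-1) then -2
            else if (i == j.+1) || (j == i.+1) then -1 else 0
    | TD => if (((i == j.+1) || (j == i.+1)) && (maxn i j <= n.-1)%N)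
               || ((i == n.-2) && (j == n)) || ((i == n) && (j == n.-2))
            then -1 else 0
    end
  else 0.

Definition in_idx (ty : ctype) (n s t : nat) : bool :=
  [&& (1 <= s)%N, inI n t &
   match ty with
   | TA => (s + t <= n.+1)%N
   | TB => (s <= n)%N
   | TD => (s <= n.-1)%N
   end].

(* convention b_{s,t} = 0 for (s,t) outside the index set *)
Definition bv (ty : ctype) (n : nat) (b : nat -> nat -> int) (s t : nat) : int :=
  if in_idx ty n s t then b s t else 0.

Definition nonneg_vec (ty : ctype) (n : nat) (b : nat -> nat -> int) : Prop :=
  forall s t, in_idx ty n s t -> 0 <= b s t.

Definition dstar (ty : ctype) (n : nat) (s t : nat) (b : nat -> nat -> int) : int :=
  bv ty n b s.-1 t
  + \sum_(t.+1 <= k < n.+1) cartan ty n t k * bv ty n b s.-1 k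
  + \sum_(1 <= k < t) cartan ty n t k * bv ty n b s k
  + bv ty n b s t.

(* shape of the tableau T_i^* (row lengths, top to bottom) *)
Definition tshape (ty : ctype) (n i : nat) : seq nat :=
  match ty with
  | TA => [:: i]
  | TB => if (i <= n.-1)%N then [:: i] else rev (iota 1 n)
  | TD => if (i <= n.-2)%N then [:: i] else rev (iota 1 n.-1)
  end.

(* entries T_i^*(s,t) (s = row, t = column, both starting at 1) *)
Definition tentry (ty : ctype) (n i s t : nat) (b : nat -> nat -> int) : int :=
  let row := dstar ty n t (i.+1 - t) b in
  match ty with
  | TA => row
  | TB => if (i <= n.-1)%N then row
          else if (2 <= t)%N then 2 * dstar ty n (s + t - 1) (n - t) b
          else dstar ty n s n b
  | TD => if (i <= n.-2)%N then row
          else if (2 <= t)%N then dstar ty n (s + t - 1) (n - t) b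
          else if odd s == (i == n.-1) then dstar ty n s n.-1 b
          else dstar ty n s n b
  end.

(* partitions are sequences of (positive) parts; lam k = nth 0 lam k is the
   length of row k+1 *)
Definition strict_part (lam : seq nat) : bool :=
  all (fun x => 0 < x)%N lam && sorted (fun x y => y < x)%N lam.

Definition inPi (ty : ctype) (n i : nat) (lam : seq nat) : Prop :=
  lam != [::] /\ strict_part lam /\
  forall k, (nth 0 lam k <= nth 0 (tshape ty n i) k)%N.

Definition Sigma (ty : ctype) (n i : nat) (lam : seq nat) (b : nat -> nat -> int) : int :=
  \sum_(0 <= r < size lam) \sum_(0 <= c < nth 0 lam r) tentry ty n i r.+1 c.+1 b.

Definition part_union (lam mu : seq nat) : seq nat :=
  mkseq (fun k => maxn (nth 0 lam k) (nth 0 mu k)) (maxn (size lam) (size mu)).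

Definition part_inter (lam mu : seq nat) : seq nat :=
  mkseq (fun k => minn (nth 0 lam k) (nth 0 mu k)) (minn (size lam) (size mu)).

Definition is_sigma (ty : ctype) (n i : nat) (b : nat -> nat -> int) (x : int) : Prop :=
  (exists2 tau, inPi ty n i tau & x = Sigma ty n i tau b) /\
  (forall tau, inPi ty n i tau -> Sigma ty n i tau b <= x).

(** Row
    by row, [lam \cup mu] and [lam \cap mu] have lengths [max] and [min] of
    those of [lam] and [mu], so together they contain the boxes of [lam] and
    of [mu], whence
      [Sigma_(lam \cup mu) + Sigma_(lam \cap mu) = Sigma_lam + Sigma_mu].
    Strict partitions inside a fixed shape are closed under row-wise [max] and
    [min], so both terms on the left are at most [sigma]; as the right-hand
    side is [2 sigma], both equal [sigma].  Neither the Cartan data nor the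
    positivity of [b] enters the argument. *)

From mathcomp Require Import all_boot all_order all_algebra.
From mathcomp Require Import zify.
Import Order.TTheory GRing.Theory Num.Theory.

Set Implicit Arguments.
Unset Strict Implicit.
Unset Printing Implicit Defensive.

Lemma strict_partP (s : seq nat) :
  reflect ((forall k, k < size s -> 0 < nth 0 s k) /\
           (forall k, k < size s -> nth 0 s k.+1 < nth 0 s k))
          (strict_part s).
Proof.
apply: (iffP andP) => [[/(all_nthP 0) s_gt0 /(sortedP 0) s_sorted] | [s_gt0 s_decr]].
- split=> // k lt_k_s; case: (ltnP k.+1 (size s)) => [|le_s_k1]; first exact: s_sorted.
  by rewrite nth_default //; apply: s_gt0.
- by split; [apply/(all_nthP 0) | apply/(sortedP 0) => k /ltnW /s_decr].
Qed.

Lemma size_part_union lam mu : size (part_union lam mu) = maxn (size lam) (size mu).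
Proof. exact: size_mkseq. Qed.

Lemma size_part_inter lam mu : size (part_inter lam mu) = minn (size lam) (size mu).
Proof. exact: size_mkseq. Qed.

Lemma nth_part_union lam mu k :
  nth 0 (part_union lam mu) k = maxn (nth 0 lam k) (nth 0 mu k).
Proof.
case: (ltnP k (maxn (size lam) (size mu))) => [|]; first exact: nth_mkseq.
rewrite geq_max => /andP [le_lam_k le_mu_k].
by rewrite !nth_default ?size_part_union ?geq_max ?le_lam_k.
Qed.

Lemma nth_part_inter lam mu k :
  nth 0 (part_inter lam mu) k = minn (nth 0 lam k) (nth 0 mu k).
Proof.
case: (ltnP k (minn (size lam) (size mu))) => [|le_min_k]; first exact: nth_mkseq.
rewrite nth_default ?size_part_inter //.
move: le_min_k; rewrite geq_min => /orP [] le_k.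
  by rewrite (nth_default 0 le_k) min0n.
by rewrite (nth_default 0 le_k) minn0.
Qed.

Lemma strict_part_union lam mu :
  strict_part lam -> strict_part mu -> strict_part (part_union lam mu).
Proof.
move=> /strict_partP [lam_gt0 lam_decr] /strict_partP [mu_gt0 mu_decr].
apply/strict_partP; rewrite size_part_union.
split=> k lt_k; rewrite !nth_part_union.
  by have := lam_gt0 k; have := mu_gt0 k; lia.
have nth_out k' s : size s <= k' -> nth 0 s k' = 0 by move=> ?; rewrite nth_default.
case: (ltnP k (size lam)) => [lt_k_lam | le_lam_k];
  case: (ltnP k (size mu)) => [lt_k_mu | le_mu_k].
- by have := lam_decr k lt_k_lam; have := mu_decr k lt_k_mu; lia.
- by have := lam_decr k lt_k_lam; rewrite (nth_out k.+1 mu) ?(nth_out k mu); lia.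
- by have := mu_decr k lt_k_mu; rewrite (nth_out k.+1 lam) ?(nth_out k lam); lia.
- lia.
Qed.

Lemma strict_part_inter lam mu :
  strict_part lam -> strict_part mu -> strict_part (part_inter lam mu).
Proof.
move=> /strict_partP [lam_gt0 lam_decr] /strict_partP [mu_gt0 mu_decr].
apply/strict_partP; rewrite size_part_inter.
split=> k lt_k; rewrite !nth_part_inter.
- by have := lam_gt0 k; have := mu_gt0 k; lia.
- by have := lam_decr k; have := mu_decr k; lia.
Qed.

Lemma contained_part_union (sh lam mu : seq nat) :
  (forall k, nth 0 lam k <= nth 0 sh k) -> (forall k, nth 0 mu k <= nth 0 sh k) ->
  forall k, nth 0 (part_union lam mu) k <= nth 0 sh k.
Proof. by move=> lam_sh mu_sh k; rewrite nth_part_union geq_max lam_sh mu_sh. Qed.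

Lemma contained_part_inter (sh lam mu : seq nat) :
  (forall k, nth 0 lam k <= nth 0 sh k) ->
  forall k, nth 0 (part_inter lam mu) k <= nth 0 sh k.
Proof. by move=> lam_sh k; rewrite nth_part_inter (leq_trans (geq_minl _ _)). Qed.

Lemma inPi_union ty n i lam mu :
  inPi ty n i lam -> inPi ty n i mu -> inPi ty n i (part_union lam mu).
Proof.
move=> [lam_nil [lam_strict lam_sh]] [_ [mu_strict mu_sh]].
split; last by split; [exact: strict_part_union | exact: contained_part_union].
by rewrite -size_eq0 size_part_union -lt0n leq_max lt0n size_eq0 lam_nil.
Qed.

Lemma inPi_inter ty n i lam mu :
  inPi ty n i lam -> inPi ty n i mu -> inPi ty n i (part_inter lam mu).
Proof.
move=> [lam_nil [lam_strict lam_sh]] [mu_nil [mu_strict _]].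
split; last by split; [exact: strict_part_inter | exact: contained_part_inter].
by rewrite -size_eq0 size_part_inter -lt0n leq_min !lt0n !size_eq0 lam_nil mu_nil.
Qed.

Local Open Scope ring_scope.

Definition box_sum (V : nmodType) (F : nat -> nat -> V) (lam : seq nat) : V :=
  \sum_(0 <= r < size lam) \sum_(0 <= c < nth 0%N lam r) F r c.

Lemma box_sum_widen (V : nmodType) (F : nat -> nat -> V) lam N :
  (size lam <= N)%N ->
  box_sum F lam = \sum_(0 <= r < N) \sum_(0 <= c < nth 0%N lam r) F r c.
Proof.
move=> le_lam_N; rewrite /box_sum (@big_cat_nat _ _ _ (size lam) 0 N) //=.
rewrite [X in _ + X]big_nat_cond [X in _ + X]big1 ?addr0 // => r.
by rewrite andbT => /andP [le_lam_r _]; rewrite nth_default // big_geq.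
Qed.

Lemma box_sum_union_inter (V : nmodType) (F : nat -> nat -> V) lam mu :
  box_sum F (part_union lam mu) + box_sum F (part_inter lam mu) =
  box_sum F lam + box_sum F mu.
Proof.
pose N := (size lam + size mu)%N.
rewrite !(@box_sum_widen _ _ _ N) ?size_part_union ?size_part_inter;
  try (rewrite /N; lia).
rewrite -!big_split /=; apply: eq_bigr => r _.
rewrite nth_part_union nth_part_inter.
by case: (leqP (nth 0%N lam r) (nth 0%N mu r)) => _ //; rewrite addrC.
Qed.

Lemma Sigma_box_sum ty n i lam b :
  Sigma ty n i lam b = box_sum (fun r c => tentry ty n i r.+1 c.+1 b) lam.
Proof. by []. Qed.

Lemma eq_bound_of_add_eq (R : numDomainType) (m x y : R) :
  x <= m -> y <= m -> x + y = m + m -> x = m /\ y = m.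
Proof.
move=> le_x_m le_y_m sum_eq.
have [_] := leifD (leif_eq le_x_m) (leif_eq le_y_m).
by rewrite sum_eq eqxx => /esym/andP [/eqP -> /eqP ->].
Qed.

Theorem lemma3p7 (ty : ctype) (n : nat) (Hty : valid_type ty n)
  (i : nat) (Hi : inI n i) (b : nat -> nat -> int) (Hb : nonneg_vec ty n b)
  (sigma : int) (Hsigma : is_sigma ty n i b sigma)
  (lam mu : seq nat) (Hlam : inPi ty n i lam) (Hmu : inPi ty n i mu) :
  sigma = Sigma ty n i lam b -> sigma = Sigma ty n i mu b ->
  sigma = Sigma ty n i (part_union lam mu) b /\
  sigma = Sigma ty n i (part_inter lam mu) b.
Proof.
move=> sigma_lam sigma_mu; case: Hsigma => _ sigma_max.
have sum_eq : Sigma ty n i (part_union lam mu) b + Sigma ty n i (part_inter lam mu) b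
              = sigma + sigma.
  by rewrite {1}sigma_lam sigma_mu !Sigma_box_sum box_sum_union_inter.
by have [-> ->] := eq_bound_of_add_eq (sigma_max _ (inPi_union Hlam Hmu))
                                      (sigma_max _ (inPi_inter Hlam Hmu)) sum_eq.
Qed.
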